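(* Let $\epsilon>0$ be sufficiently small. For $\chi\in[0,\pi]$, $\psi\in[-\pi/2,\pi/2]$ set $A_0=e^{i\chi\sigma_z}$, $a_0=i\sigma_x\cos\psi+i\sigma_z\sin\psi$, $c=A_0a_0A_0^{-1}$, and let $$Q(\chi,\psi)=\big[(\,a_0,\ a_0^{-1}c\,a_0A_0,\ a_0^{-1}c\,a_0,\ c\,a_0^{-1}c^{-1}\,)\big]\in R(T^2,2).$$ If $Q(\chi,\psi)=L_s(\phi,\theta)$ for some spherical-polar coordinates $(\phi,\theta)$, then $\chi=\pi/2$, and either $\theta\in\{\pi/2,3\pi/2\}$ or $\phi\in\{0,\pi\}$.
   Context: Pauli matrices standard; $[A,B]=ABA^{-1}B^{-1}$. $R(T^2,2)$ is the space of tuples $(A,B,a,b)\in SU(2)^4$ with $\operatorname{tr}a=\operatorname{tr}b=0$ and $[A,B]ab=1$ modulo simultaneous conjugation (the tuple defining $Q$ satisfies these conditions). For $\nu=\epsilon\sin\phi$, $L_s(\phi,\theta)=[(A,B,a,b)]$ with $a=i\sigma_z$, $h=(\cos^2\nu+\sin^2\nu\sin^2\theta)^{-1/2}(i\sigma_x\cos\nu-i\sigma_z\sin\nu\sin\theta)$, $A=h(\cos\phi+i\sin\phi(\sigma_x\cos\theta+\sigma_y\sin\theta))$, $B=\cos\nu+i\sin\nu(\sigma_x\cos\theta+\sigma_y\sin\theta)$, $b=-ha^{-1}h^{-1}$. ($Q(\chi,\psi)$ is the image of the disk Lagrangian point $[(e^{i\chi\sigma_z},1,a_0,a_0^{-1})]$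 under the mapping class $s\beta_1\alpha_1^{-1}$ of the twice-punctured torus that produces the trefoil in $S^3$.) *)

From Stdlib Require Import Reals.
Open Scope R_scope.

Record C := mkC { re : R ; im : R }.
Definition RtoC (x : R) : C := mkC x 0.
Definition C0 : C := mkC 0 0.
Definition C1 : C := mkC 1 0.
Definition Ci : C := mkC 0 1.
Definition Cadd (z w : C) : C := mkC (re z + re w) (im z + im w).
Definition Cneg (z : C) : C := mkC (- re z) (- im z).
Definition Cmul (z w : C) : C :=
  mkC (re z * re w - im z * im w) (re z * im w + im z * re w).
Definition Cconj (z : C) : C := mkC (re z) (- im z).
Definition Cinv (z : C) : C :=
  mkC (re z / (re z ^ 2 + im z ^ 2)) (- im z / (re z ^ 2 + im z ^ 2)).

Record M2 := mkM { m11 : C ; m12 : C ; m21 : C ; m22 : C }.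
Definition Mid : M2 := mkM C1 C0 C0 C1.
Definition Madd (A B : M2) : M2 :=
  mkM (Cadd (m11 A) (m11 B)) (Cadd (m12 A) (m12 B))
      (Cadd (m21 A) (m21 B)) (Cadd (m22 A) (m22 B)).
Definition Mscale (c : C) (A : M2) : M2 :=
  mkM (Cmul c (m11 A)) (Cmul c (m12 A)) (Cmul c (m21 A)) (Cmul c (m22 A)).
Definition Mmul (A B : M2) : M2 :=
  mkM (Cadd (Cmul (m11 A) (m11 B)) (Cmul (m12 A) (m21 B)))
      (Cadd (Cmul (m11 A) (m12 B)) (Cmul (m12 A) (m22 B)))
      (Cadd (Cmul (m21 A) (m11 B)) (Cmul (m22 A) (m21 B)))
      (Cadd (Cmul (m21 A) (m12 B)) (Cmul (m22 A) (m22 B))).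
Definition Mdet (A : M2) : C :=
  Cadd (Cmul (m11 A) (m22 A)) (Cneg (Cmul (m12 A) (m21 A))).
Definition Mtr (A : M2) : C := Cadd (m11 A) (m22 A).
Definition Madj (A : M2) : M2 :=
  mkM (Cconj (m11 A)) (Cconj (m21 A)) (Cconj (m12 A)) (Cconj (m22 A)).
Definition Minv (A : M2) : M2 :=
  Mscale (Cinv (Mdet A)) (mkM (m22 A) (Cneg (m12 A)) (Cneg (m21 A)) (m11 A)).

Definition SU2 (A : M2) : Prop := Mmul (Madj A) A = Mid /\ Mdet A = C1.

Definition sx : M2 := mkM C0 C1 C1 C0.
Definition sy : M2 := mkM C0 (Cneg Ci) Ci C0.
Definition sz : M2 := mkM C1 C0 C0 (Cneg C1).

Definition qmat (a b c d : R) : M2 :=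
  Madd (Mscale (RtoC a) Mid)
       (Mscale Ci (Madd (Mscale (RtoC b) sx)
                        (Madd (Mscale (RtoC c) sy) (Mscale (RtoC d) sz)))).

Definition comm (A B : M2) : M2 := Mmul (Mmul (Mmul A B) (Minv A)) (Minv B).

Record tuple4 := mkT { tA : M2 ; tB : M2 ; ta : M2 ; tb : M2 }.

(** Points of R(T^2,2) (before taking the quotient) *)
Definition in_RT2_2 (t : tuple4) : Prop :=
  SU2 (tA t) /\ SU2 (tB t) /\ SU2 (ta t) /\ SU2 (tb t) /\
  Mtr (ta t) = C0 /\ Mtr (tb t) = C0 /\
  Mmul (Mmul (comm (tA t) (tB t)) (ta t)) (tb t) = Mid.

Definition conjM (g X : M2) : M2 := Mmul (Mmul g X) (Minv g).

Definition same_class (t u : tuple4) : Prop :=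
  exists g : M2, SU2 g /\
    conjM g (tA t) = tA u /\ conjM g (tB t) = tB u /\
    conjM g (ta t) = ta u /\ conjM g (tb t) = tb u.

Definition A0 (chi : R) : M2 := qmat (cos chi) 0 0 (sin chi). (* e^{i chi sz} *)
Definition a0 (psi : R) : M2 := qmat 0 (cos psi) 0 (sin psi).
Definition cQ (chi psi : R) : M2 := conjM (A0 chi) (a0 psi).
Definition Q (chi psi : R) : tuple4 :=
  let a := a0 psi in let c := cQ chi psi in
  mkT a
      (Mmul (Mmul (Mmul (Minv a) c) a) (A0 chi))
      (Mmul (Mmul (Minv a) c) a)
      (Mmul (Mmul c (Minv a)) (Minv c)).

Definition nu (eps phi : R) : R := eps * sin phi.
Definition hL (eps phi theta : R) : M2 :=
  let v := nu eps phi in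
  Mscale (RtoC (/ sqrt (cos v ^ 2 + sin v ^ 2 * sin theta ^ 2)))
         (qmat 0 (cos v) 0 (- (sin v * sin theta))).
Definition Ls (eps phi theta : R) : tuple4 :=
  let v := nu eps phi in
  let h := hL eps phi theta in
  let a := qmat 0 0 0 1 in
  mkT (Mmul h (qmat (cos phi) (sin phi * cos theta) (sin phi * sin theta) 0))
      (qmat (cos v) (sin v * cos theta) (sin v * sin theta) 0)
      a
      (Mscale (RtoC (-1)) (Mmul (Mmul h (Minv a)) (Minv h))).

(* Both classes are compared through two conjugation-invariant traces.  In
   Q(chi,psi) the element c is a conjugate of the pure unit quaternion a0, so
   (a0^-1 c a0)^2 = -1 and tr(a B) = tr(-A0) = -2 cos chi, while in L_s the
   matrices a = i sz and B have trace-orthogonal imaginary parts, so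
   tr(a B) = 0; hence cos chi = 0.  Likewise tr A = tr a0 = 0 for Q, whereas
   for L_s it is a positive multiple of -sin phi cos theta as soon as
   |nu| < 1 < pi/2; hence sin phi cos theta = 0. *)
From Pilot Require Import Defs.
From Stdlib Require Import Reals Lra.
Open Scope R_scope.
Import Pilot.Defs.

Ltac destruct_M2 X := destruct X as [[? ?] [? ?] [? ?] [? ?]].
Ltac M2_ext :=
  repeat match goal with
  | |- mkM _ _ _ _ = mkM _ _ _ _ => f_equal
  | |- mkC _ _ = mkC _ _ => f_equal
  end.
Ltac M2_unfold :=
  unfold Mmul, Mtr, Mid, Mscale, Madd, qmat, sx, sy, sz, Mdet,
    Cadd, Cmul, Cneg, RtoC, C0, C1, Ci; cbn; M2_ext.

Lemma Mmul_assoc (A B C' : M2) : Mmul A (Mmul B C') = Mmul (Mmul A B) C'.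
Proof. destruct_M2 A; destruct_M2 B; destruct_M2 C'; M2_unfold; ring. Qed.

Lemma Mmul_1l (A : M2) : Mmul Mid A = A.
Proof. destruct_M2 A; M2_unfold; ring. Qed.

Lemma Mmul_1r (A : M2) : Mmul A Mid = A.
Proof. destruct_M2 A; M2_unfold; ring. Qed.

Lemma Mtr_mulC (A B : M2) : Mtr (Mmul A B) = Mtr (Mmul B A).
Proof. destruct_M2 A; destruct_M2 B; M2_unfold; ring. Qed.

Definition Mopp1 : M2 := Mscale (RtoC (-1)) Mid.

Lemma Mmul_Mopp1C (A : M2) : Mmul A Mopp1 = Mmul Mopp1 A.
Proof. destruct_M2 A; unfold Mopp1; M2_unfold; ring. Qed.

Lemma Mtr_Mopp1_mul (A : M2) : Mtr (Mmul Mopp1 A) = Cneg (Mtr A).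
Proof. destruct_M2 A; unfold Mopp1; M2_unfold; ring. Qed.

Lemma Minv_mulr (g : M2) : Mdet g = C1 -> Mmul g (Minv g) = Mid.
Proof.
  intro Hdet; unfold Minv; rewrite Hdet.
  replace (Cinv C1) with C1 by (unfold Cinv, C1; cbn; f_equal; field).
  destruct_M2 g; unfold Mdet, Cadd, Cmul, Cneg in Hdet; cbn in Hdet.
  injection Hdet as Hre Him; M2_unfold; nra.
Qed.

Lemma Minv_mull (g : M2) : Mdet g = C1 -> Mmul (Minv g) g = Mid.
Proof.
  intro Hdet; unfold Minv; rewrite Hdet.
  replace (Cinv C1) with C1 by (unfold Cinv, C1; cbn; f_equal; field).
  destruct_M2 g; unfold Mdet, Cadd, Cmul, Cneg in Hdet; cbn in Hdet.
  injection Hdet as Hre Him; M2_unfold; nra.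
Qed.

(* Conjugation [X |-> P X P'] is taken by a pair with [P' P = 1] rather than by
   [g], [Minv g], so that it also covers [Minv a0 * c * a0]. *)

Section Conjugation.

Variables P P' : M2.
Hypothesis invP : Mmul P' P = Mid.

Lemma conj_mul (X Y : M2) :
  Mmul (Mmul (Mmul P X) P') (Mmul (Mmul P Y) P') = Mmul (Mmul P (Mmul X Y)) P'.
Proof.
  rewrite <- !Mmul_assoc, (Mmul_assoc P' P), invP, Mmul_1l; reflexivity.
Qed.

Lemma Mtr_conj (X : M2) : Mtr (Mmul (Mmul P X) P') = Mtr X.
Proof. rewrite Mtr_mulC, Mmul_assoc, invP, Mmul_1l; reflexivity. Qed.

End Conjugation.

Lemma conj_Mopp1 (P P' : M2) : Mmul P P' = Mid -> Mmul (Mmul P Mopp1) P' = Mopp1.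
Proof. intro invP; rewrite Mmul_Mopp1C, <- Mmul_assoc, invP, Mmul_1r; reflexivity. Qed.

Lemma same_class_Mtr_tA (t u : tuple4) : same_class t u -> Mtr (tA t) = Mtr (tA u).
Proof.
  intros [g [[_ Hdet] [<- _]]].
  unfold conjM; rewrite (Mtr_conj _ _ (Minv_mull g Hdet)); reflexivity.
Qed.

Lemma same_class_Mtr_ta_tB (t u : tuple4) :
  same_class t u -> Mtr (Mmul (ta t) (tB t)) = Mtr (Mmul (ta u) (tB u)).
Proof.
  intros [g [[_ Hdet] [_ [<- [<- _]]]]].
  unfold conjM; rewrite (conj_mul _ _ (Minv_mull g Hdet)).
  rewrite (Mtr_conj _ _ (Minv_mull g Hdet)); reflexivity.
Qed.

Lemma Mdet_qmat (a b c d : R) : Mdet (qmat a b c d) = RtoC (a ^ 2 + b ^ 2 + c ^ 2 + d ^ 2).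
Proof. M2_unfold; ring. Qed.

Lemma Mtr_qmat (a b c d : R) : Mtr (qmat a b c d) = RtoC (2 * a).
Proof. M2_unfold; ring. Qed.

Lemma Mtr_qmat_mul (a b c d a' b' c' d' : R) :
  Mtr (Mmul (qmat a b c d) (qmat a' b' c' d'))
  = RtoC (2 * (a * a' - b * b' - c * c' - d * d')).
Proof. M2_unfold; ring. Qed.

Lemma Mtr_scale_qmat_mul (k a b c d a' b' c' d' : R) :
  Mtr (Mmul (Mscale (RtoC k) (qmat a b c d)) (qmat a' b' c' d'))
  = RtoC (2 * k * (a * a' - b * b' - c * c' - d * d')).
Proof. M2_unfold; ring. Qed.

Lemma qmat_pure_sqr (b c d : R) :
  b ^ 2 + c ^ 2 + d ^ 2 = 1 -> Mmul (qmat 0 b c d) (qmat 0 b c d) = Mopp1.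
Proof. intro Hunit; unfold Mopp1; M2_unfold; nra. Qed.

Lemma cos_sin_sqr (x : R) : cos x ^ 2 + sin x ^ 2 = 1.
Proof. pose proof (sin2_cos2 x); unfold Rsqr in *; lra. Qed.

Lemma Mdet_A0 (chi : R) : Mdet (A0 chi) = C1.
Proof.
  unfold A0; rewrite Mdet_qmat; unfold RtoC, C1; f_equal.
  rewrite <- (cos_sin_sqr chi); ring.
Qed.

Lemma Mdet_a0 (psi : R) : Mdet (a0 psi) = C1.
Proof.
  unfold a0; rewrite Mdet_qmat; unfold RtoC, C1; f_equal.
  rewrite <- (cos_sin_sqr psi); ring.
Qed.

Lemma Q_Mtr_tA (chi psi : R) : Mtr (tA (Q chi psi)) = RtoC 0.
Proof. cbn [Q tA]; unfold a0; rewrite Mtr_qmat; f_equal; ring. Qed.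

Lemma Q_Mtr_ta_tB (chi psi : R) :
  Mtr (Mmul (ta (Q chi psi)) (tB (Q chi psi))) = Cneg (RtoC (2 * cos chi)).
Proof.
  cbn [Q ta tB].
  set (a := a0 psi); set (c := cQ chi psi); set (t := Mmul (Mmul (Minv a) c) a).
  assert (c_sqr : Mmul c c = Mopp1).
  { unfold c, cQ, conjM; rewrite (conj_mul _ _ (Minv_mull _ (Mdet_A0 chi))).
    unfold a, a0; rewrite qmat_pure_sqr by (rewrite <- (cos_sin_sqr psi); ring).
    exact (conj_Mopp1 _ _ (Minv_mulr _ (Mdet_A0 chi))). }
  assert (t_sqr : Mmul t t = Mopp1).
  { unfold t; rewrite (conj_mul _ _ (Minv_mulr _ (Mdet_a0 psi))), c_sqr.
    exact (conj_Mopp1 _ _ (Minv_mull _ (Mdet_a0 psi))). }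
  rewrite Mmul_assoc, t_sqr, Mtr_Mopp1_mul; unfold A0; rewrite Mtr_qmat; reflexivity.
Qed.

Lemma Ls_Mtr_ta_tB (eps phi theta : R) :
  Mtr (Mmul (ta (Ls eps phi theta)) (tB (Ls eps phi theta))) = RtoC 0.
Proof. cbn [Ls ta tB]; rewrite Mtr_qmat_mul; f_equal; ring. Qed.

Lemma cos_nu_gt0 (eps phi : R) : 0 < eps < 1 -> 0 < cos (nu eps phi).
Proof.
  intro Heps; pose proof (SIN_bound phi); pose proof PI2_1.
  unfold nu; apply cos_gt_0; nra.
Qed.

Lemma Ls_Mtr_tA (eps phi theta : R) : 0 < eps < 1 ->
  exists k, 0 < k /\ re (Mtr (tA (Ls eps phi theta))) = - k * (sin phi * cos theta).
Proof.
  intro Heps; pose proof (cos_nu_gt0 eps phi Heps) as Hcos.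
  set (v := nu eps phi) in *.
  set (s := sqrt (cos v ^ 2 + sin v ^ 2 * sin theta ^ 2)).
  assert (Hs : 0 < s) by (apply sqrt_lt_R0; nra).
  exists (2 * / s * cos v); split.
  - pose proof (Rinv_0_lt_compat s Hs); nra.
  - cbn [Ls tA]; unfold hL; fold v; fold s.
    rewrite Mtr_scale_qmat_mul; cbn; ring.
Qed.

Lemma cos_eq0_0PI (x : R) : 0 <= x <= PI -> cos x = 0 -> x = PI / 2.
Proof.
  intros Hx Hcos; pose proof PI_RGT_0.
  apply cos_inj; [exact Hx | lra | rewrite Hcos, cos_PI2; reflexivity].
Qed.

Lemma cos_eq0_02PI (x : R) :
  0 <= x < 2 * PI -> cos x = 0 -> x = PI / 2 \/ x = 3 * PI / 2.
Proof.
  intros Hx Hcos; destruct (Rle_dec x PI) as [Hle | Hgt].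
  - left; apply cos_eq0_0PI; [lra | exact Hcos].
  - right; enough (x - PI = PI / 2) by lra.
    apply cos_eq0_0PI; [lra |].
    rewrite cos_minus, cos_PI, sin_PI, Hcos; ring.
Qed.

Lemma sin_eq0_0PI (x : R) : 0 <= x <= PI -> sin x = 0 -> x = 0 \/ x = PI.
Proof.
  intros Hx Hsin.
  destruct (Req_dec x 0) as [-> | H0]; [left; reflexivity |].
  destruct (Req_dec x PI) as [-> | HPI]; [right; reflexivity |].
  enough (0 < sin x) by lra.
  apply sin_gt_0; lra.
Qed.

Theorem mainTheorem15 :
  exists eps0 : R, 0 < eps0 /\
  forall eps : R, 0 < eps < eps0 ->
  forall chi psi phi theta : R,
    0 <= chi <= PI ->
    - (PI / 2) <= psi <= PI / 2 ->
    0 <= phi <= PI ->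
    0 <= theta < 2 * PI ->
    same_class (Q chi psi) (Ls eps phi theta) ->
    chi = PI / 2 /\
    (theta = PI / 2 \/ theta = 3 * PI / 2 \/ phi = 0 \/ phi = PI).
Proof.
  exists 1; split; [lra |].
  intros eps Heps chi psi phi theta Hchi _ Hphi Htheta Hclass; split.
  - apply cos_eq0_0PI; [exact Hchi |].
    pose proof (same_class_Mtr_ta_tB _ _ Hclass) as HaB.
    rewrite Q_Mtr_ta_tB, Ls_Mtr_ta_tB in HaB.
    apply (f_equal re) in HaB; cbn in HaB; lra.
  - pose proof (same_class_Mtr_tA _ _ Hclass) as HA.
    destruct (Ls_Mtr_tA eps phi theta Heps) as [k [Hk HLs]].
    rewrite Q_Mtr_tA in HA; apply (f_equal re) in HA; cbn [re RtoC] in HA; rewrite HLs in HA.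
    assert (Hprod : k * (sin phi * cos theta) = 0) by lra.
    apply Rmult_integral in Hprod as [Hk0 | Hprod]; [lra |].
    apply Rmult_integral in Hprod as [Hsin | Hcos].
    + right; right; exact (sin_eq0_0PI phi Hphi Hsin).
    + destruct (cos_eq0_02PI theta Htheta Hcos); tauto.
Qed.
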